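(* In the whitened Gaussian spiked model (context), condition on the event $\mathcal{E}$. Let $S_{\mathbf{v}}^{(t)}\subset[n]$ with $|S_{\mathbf{v}}^{(t)}|\le k_{\mathbf{v}}$, let $\hat{\mathbf{v}}^{(t)}$ be a unit vector supported on $S_{\mathbf{v}}^{(t)}$, let $\mathbf{r}_{\mathbf{u}}=\widehat{\boldsymbol{\Sigma}}_{xy}\hat{\mathbf{v}}^{(t)}$, and let $S_{\mathbf{u}}^{(t+1)}$ be the index set of the $p$ largest entries of $|\mathbf{r}_{\mathbf{u}}|$, where $p\le k_{\mathbf{u}}$. Then, for a constant $C>0$ determined by the constants of the event $\mathcal{E}$, $$\|\mathbf{u}_{S_{\mathbf{u}}^{(t+1)}}\|_2\ge\sqrt{\frac{1}{s_{\mathbf{u}}(|S_{\mathbf{u}}^{(t+1)}|)}}-\frac{2C(1+\rho)}{\rho|\langle\mathbf{v},\hat{\mathbf{v}}^{(t)}\rangle|}\sqrt{\frac{(|S_{\mathbf{u}}^{(t+1)}|+|S_{\mathbf{v}}^{(t)}|)\log n}{m}}.$$ Symmetrically, if $\hat{\mathbf{u}}^{(t)}$ is a unit vector supported on $S_{\mathbf{u}}^{(t)}$ with $|S_{\mathbf{u}}^{(t)}|\le k_{\mathbf{u}}$, $\mathbf{r}_{\mathbf{v}}=\widehat{\boldsymbol{\Sigma}}_{xy}^\top\hat{\mathbf{u}}^{(t)}$, and $S_{\mathbf{v}}^{(t+1)}$ is the index set of the $q\le k_{\mathbf{v}}$ largest entries of $|\mathbf{r}_{\mathbf{v}}|$,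 then $$\|\mathbf{v}_{S_{\mathbf{v}}^{(t+1)}}\|_2\ge\sqrt{\frac{1}{s_{\mathbf{v}}(|S_{\mathbf{v}}^{(t+1)}|)}}-\frac{2C(1+\rho)}{\rho|\langle\mathbf{u},\hat{\mathbf{u}}^{(t)}\rangle|}\sqrt{\frac{(|S_{\mathbf{u}}^{(t)}|+|S_{\mathbf{v}}^{(t+1)}|)\log n}{m}}.$$
   Context: Model: $m$ i.i.d. samples $(\mathbf{x}_i,\mathbf{y}_i)$ from a zero-mean jointly Gaussian law on $\mathbb{R}^n\times\mathbb{R}^n$ with $\boldsymbol{\Sigma}_{xx}=\boldsymbol{\Sigma}_{yy}=\mathbf{I}_n$, $\boldsymbol{\Sigma}_{xy}=\rho\mathbf{u}\mathbf{v}^\top$, $\rho\in(0,1)$, $\|\mathbf{u}\|_2=\|\mathbf{v}\|_2=1$, $\|\mathbf{u}\|_0\le k_{\mathbf{u}}$, $\|\mathbf{v}\|_0\le k_{\mathbf{v}}$. $\widehat{\boldsymbol{\Sigma}}_{xy}=\frac1m\sum_i\mathbf{x}_i\mathbf{y}_i^\top$, $\mathbf{W}=\widehat{\boldsymbol{\Sigma}}_{xy}-\rho\mathbf{u}\mathbf{v}^\top$. Event $\mathcal{E}$: for all $S_1,S_2\subset[n]$ with $|S_1|\le k_{\mathbf{u}}$, $|S_2|\le k_{\mathbf{v}}$, $\|\mathbf{W}_{S_1,S_2}\|_2\le C'\sqrt{((|S_1|+|S_2|)\log n+c'\log n)/m}$ for fixed constants $C',c'>0$ (submatrix, spectral norm).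 $\mathbf{x}_S$ is the subvector on $S$. Structure functions: $s_{\mathbf{u}}(p)=(\sum_{i=1}^pu_{(i)}^2)^{-1}$, $s_{\mathbf{v}}(q)=(\sum_{j=1}^qv_{(j)}^2)^{-1}$, where $u_{(i)}$ is the $i$-th largest entry of $\mathbf{u}$ in absolute value. *)

From HB Require Import structures.
From mathcomp Require Import all_boot all_order all_algebra.
From mathcomp Require Import all_classical all_reals.
From mathcomp Require Import exp.
Set Implicit Arguments. Unset Strict Implicit. Unset Printing Implicit Defensive.
Import Order.TTheory GRing.Theory Num.Theory.
Local Open Scope ring_scope.
Local Open Scope classical_set_scope.

Section Defs.
Variable R : realType.

Definition norm2 {q : nat} (x : 'cV[R]_q) : R :=
  Num.sqrt (\sum_(i < q) x i 0 ^+ 2).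

Definition subnorm2 {n : nat} (x : 'cV[R]_n) (S : {set 'I_n}) : R :=
  Num.sqrt (\sum_(i in S) x i 0 ^+ 2).

Definition inner {n : nat} (x y : 'cV[R]_n) : R := \sum_(i < n) x i 0 * y i 0.

Definition specnorm {p q : nat} (A : 'M[R]_(p, q)) : R :=
  sup [set norm2 (A *m x) | x in [set x : 'cV[R]_q | norm2 x = 1]].

Definition submx {n : nat} (S1 S2 : {set 'I_n}) (W : 'M[R]_n)
  : 'M[R]_(#|S1|, #|S2|) :=
  \matrix_(i < #|S1|, j < #|S2|) W (enum_val i) (enum_val j).

Definition supported_on {n : nat} (x : 'cV[R]_n) (S : {set 'I_n}) : Prop :=
  forall i, i \notin S -> x i 0 = 0.

(* sum_{i=1}^p x_{(i)}^2, where x_{(i)} is the i-th largest entry in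
   absolute value. *)
Definition top_sq_sum {n : nat} (x : 'cV[R]_n) (p : nat) : R :=
  \sum_(a <- take p (sort (fun a b : R => b <= a)
                          [seq `|x i 0| | i <- enum 'I_n])) a ^+ 2.

Definition sfun {n : nat} (x : 'cV[R]_n) (p : nat) : R := (top_sq_sum x p)^-1.

Definition top_index_set {n : nat} (r : 'cV[R]_n) (p : nat) (S : {set 'I_n})
  : Prop :=
  #|S| = p /\ forall i j, i \in S -> j \notin S -> `|r j 0| <= `|r i 0|.

Definition l0 {n : nat} (x : 'cV[R]_n) : nat := #|[set i | x i 0 != 0]|.

Definition sample_cross_cov {n m : nat} (X Y : 'I_m -> 'cV[R]_n) : 'M[R]_n :=
  (m%:R)^-1 *: \sum_(i < m) (X i *m (Y i)^T).

Definition event_E {n : nat} (m ku kv : nat) (C' c' : R) (W : 'M[R]_n) : Prop :=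
  forall S1 S2 : {set 'I_n}, (#|S1| <= ku)%N -> (#|S2| <= kv)%N ->
    specnorm (submx S1 S2 W) <=
      C' * Num.sqrt (((#|S1| + #|S2|)%:R * ln (n%:R) + c' * ln (n%:R)) / m%:R).

End Defs.

From Pilot Require Import Defs.
From HB Require Import structures.
From mathcomp Require Import all_boot all_order all_algebra.
From mathcomp Require Import all_classical all_reals.
From mathcomp Require Import exp.
From mathcomp Require Import ring lra.
Set Implicit Arguments. Unset Strict Implicit.
Import Order.TTheory GRing.Theory Num.Theory.
Local Open Scope ring_scope.

(* Write r = Sig vh = a u + e with a = rho <v, vh> and e = W vh the noise. If T is
   a set of p largest entries of |u|, then, since S maximises ||r_S|| among p-sets,
     |a| ||u_T|| <= ||r_T|| + ||e_T|| <= ||r_S|| + ||e_T|| <= |a| ||u_S|| + ||e_S|| + ||e_T||.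
   Each ||e_T|| is at most the spectral norm of W restricted to T x S_v, which the
   event E bounds by C' (1 + c') sqrt ((p + |S_v|) log n / m). The second claim is
   the first one for the transposed model. *)

Section EuclideanSums.
Variables (R : realType) (I : finType) (P : pred I).
Implicit Types x y : I -> R.

Lemma sum_sq_ge0 x : 0 <= \sum_(i | P i) x i ^+ 2.
Proof. by apply: sumr_ge0 => i _; exact: sqr_ge0. Qed.

Lemma sum_sq_eq0 x : \sum_(i | P i) x i ^+ 2 = 0 -> forall i, P i -> x i = 0.
Proof.
move=> /(psumr_eq0P (fun i _ => sqr_ge0 (x i))) sq0 i /sq0 /eqP.
by rewrite sqrf_eq0 => /eqP.
Qed.

Lemma cauchy_schwarz_sum x y :
  \sum_(i | P i) x i * y i <=
  Num.sqrt (\sum_(i | P i) x i ^+ 2) * Num.sqrt (\sum_(i | P i) y i ^+ 2).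
Proof.
set A := \sum_(i | P i) x i ^+ 2; set B := \sum_(i | P i) y i ^+ 2.
set a := Num.sqrt A; set b := Num.sqrt B.
have a0 : 0 <= a := sqrtr_ge0 A; have b0 : 0 <= b := sqrtr_ge0 B.
have [ab0 | ab_gt0] := eqVneq (a * b) 0.
  have sum_mul0 (z w : I -> R) :
      \sum_(i | P i) z i ^+ 2 = 0 -> \sum_(i | P i) z i * w i = 0.
    by move=> z0; rewrite big1 // => i Pi; rewrite (sum_sq_eq0 z0 Pi) mul0r.
  move: ab0 => /eqP; rewrite mulf_eq0 !sqrtr_eq0 => /orP[A0 | B0].
    by rewrite sum_mul0 ?mulr_ge0 //; apply/le_anti; rewrite A0 sum_sq_ge0.
  under eq_bigr do rewrite mulrC.
  by rewrite sum_mul0 ?mulr_ge0 //; apply/le_anti; rewrite B0 sum_sq_ge0.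
have ab_pos : 0 < a * b by rewrite lt0r ab_gt0 mulr_ge0.
(* 0 <= sum (b x_i - a y_i)^2 = 2 a b (a b - sum x_i y_i) *)
have : 0 <= \sum_(i | P i) (b * x i - a * y i) ^+ 2 := sum_sq_ge0 _.
have -> : \sum_(i | P i) (b * x i - a * y i) ^+ 2 =
          b ^+ 2 * A + a ^+ 2 * B - 2 * a * b * \sum_(i | P i) x i * y i.
  rewrite /A /B !mulr_sumr -big_split /= -sumrB.
  by apply: eq_bigr => i _; ring.
have -> : B = b ^+ 2 by rewrite sqr_sqrtr ?sum_sq_ge0.
have -> : A = a ^+ 2 by rewrite sqr_sqrtr ?sum_sq_ge0.
nra.
Qed.

Lemma cauchy_schwarz_sum_sqr x y :
  (\sum_(i | P i) x i * y i) ^+ 2 <= (\sum_(i | P i) x i ^+ 2) * (\sum_(i | P i) y i ^+ 2).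
Proof.
have CS := cauchy_schwarz_sum x y.
have := cauchy_schwarz_sum x (fun i => - y i).
have -> : \sum_(i | P i) x i * - y i = - \sum_(i | P i) x i * y i.
  by rewrite -sumrN; apply: eq_bigr => i _; rewrite mulrN.
have -> : \sum_(i | P i) (- y i) ^+ 2 = \sum_(i | P i) y i ^+ 2.
  by apply: eq_bigr => i _; rewrite sqrrN.
rewrite lerNl => CSN.
rewrite -[X in X <= _]real_normK ?num_real // -(sqr_sqrtr (sum_sq_ge0 x)).
rewrite -(sqr_sqrtr (sum_sq_ge0 y)) -exprMn ler_sqr ?nnegrE ?mulr_ge0 ?sqrtr_ge0 //.
by rewrite ler_norml CS andbT.
Qed.

Lemma minkowski_sum x y :
  Num.sqrt (\sum_(i | P i) (x i + y i) ^+ 2) <=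
  Num.sqrt (\sum_(i | P i) x i ^+ 2) + Num.sqrt (\sum_(i | P i) y i ^+ 2).
Proof.
have r0 : 0 <= Num.sqrt (\sum_(i | P i) x i ^+ 2) + Num.sqrt (\sum_(i | P i) y i ^+ 2).
  by rewrite addr_ge0 // sqrtr_ge0.
rewrite -(ger0_norm r0) -sqrtr_sqr ler_sqrt ?sqr_ge0 // sqrrD !sqr_sqrtr ?sum_sq_ge0 //.
have -> : \sum_(i | P i) (x i + y i) ^+ 2 =
  \sum_(i | P i) x i ^+ 2 + 2 * \sum_(i | P i) x i * y i + \sum_(i | P i) y i ^+ 2.
  by rewrite mulr_sumr -!big_split /=; apply: eq_bigr => i _; ring.
have := cauchy_schwarz_sum x y; lra.
Qed.

Lemma sqrt_sum_sqZ x (a : R) :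
  Num.sqrt (\sum_(i | P i) (a * x i) ^+ 2) = `|a| * Num.sqrt (\sum_(i | P i) x i ^+ 2).
Proof.
under eq_bigr do rewrite exprMn.
by rewrite -mulr_sumr sqrtrM ?sqr_ge0 // sqrtr_sqr.
Qed.

End EuclideanSums.

Section SpectralNorm.
Variable R : realType.

Lemma norm2_ge0 q (x : 'cV[R]_q) : 0 <= norm2 x.
Proof. exact: sqrtr_ge0. Qed.

Lemma norm2_0 q : norm2 (0 : 'cV[R]_q) = 0.
Proof. by rewrite /norm2 big1 ?sqrtr0 // => i _; rewrite mxE expr0n. Qed.

Lemma norm2_eq0 q (x : 'cV[R]_q) : norm2 x = 0 -> x = 0.
Proof.
move/eqP; rewrite sqrtr_eq0 => x0.
have /sum_sq_eq0 xi0 : \sum_(i < q) x i 0 ^+ 2 = 0.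
  by apply: le_anti; rewrite x0 sum_sq_ge0.
by apply/matrixP => i j; rewrite (ord1 j) mxE xi0.
Qed.

Lemma norm2Z q (c : R) (x : 'cV[R]_q) : norm2 (c *: x) = `|c| * norm2 x.
Proof.
by rewrite /norm2 -(@sqrt_sum_sqZ _ _ predT); congr Num.sqrt; apply: eq_bigr => i _; rewrite mxE.
Qed.

Lemma inner_le_norm2 q (x y : 'cV[R]_q) : inner x y <= norm2 x * norm2 y.
Proof. exact: cauchy_schwarz_sum. Qed.

Lemma inner_trmx_mulmx q (x y : 'cV[R]_q) : inner x y = (x^T *m y) 0 0.
Proof. by rewrite mxE; apply: eq_bigr => i _; rewrite mxE. Qed.

Lemma norm2_sqr q (x : 'cV[R]_q) : norm2 x ^+ 2 = inner x x.
Proof. by rewrite sqr_sqrtr ?sum_sq_ge0 //; apply: eq_bigr => i _; rewrite expr2. Qed.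

Lemma norm2_mulmx_le_frobenius a b (A : 'M[R]_(a, b)) (x : 'cV[R]_b) :
  norm2 x = 1 -> norm2 (A *m x) <= Num.sqrt (\sum_i \sum_j A i j ^+ 2).
Proof.
move=> x1; rewrite /norm2 ler_sqrt; last by apply: sumr_ge0 => i _; exact: sum_sq_ge0.
apply: ler_sum => i _; rewrite mxE.
have x2 : \sum_j x j 0 ^+ 2 = 1 by rewrite -(sqr_sqrtr (sum_sq_ge0 _ _)) [Num.sqrt _]x1 expr1n.
by have := cauchy_schwarz_sum_sqr predT (A i) (x^~ 0); rewrite x2 mulr1.
Qed.

Lemma specnorm_has_ubound a b (A : 'M[R]_(a, b)) :
  has_ubound [set norm2 (A *m x) | x in [set x : 'cV[R]_b | norm2 x = 1]]%classic.
Proof.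
by exists (Num.sqrt (\sum_i \sum_j A i j ^+ 2)) => _ [x x1 <-]; exact: norm2_mulmx_le_frobenius.
Qed.

Lemma norm2_mulmx_le_specnorm a b (A : 'M[R]_(a, b)) (x : 'cV[R]_b) :
  norm2 x = 1 -> norm2 (A *m x) <= specnorm A.
Proof. by move=> x1; apply: ub_le_sup (specnorm_has_ubound A) _ _; exists x. Qed.

Lemma specnorm_eq0_no_unit a b (A : 'M[R]_(a, b)) :
  ~ (exists x : 'cV[R]_b, norm2 x = 1) -> specnorm A = 0.
Proof.
move=> no_unit; rewrite /specnorm -[RHS](@sup0 R); congr sup.
by apply/seteqP; split => // y [x x1 _]; apply: no_unit; exists x.
Qed.

Lemma specnorm_ge0 a b (A : 'M[R]_(a, b)) : 0 <= specnorm A.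
Proof.
have [[x x1] | /specnorm_eq0_no_unit -> //] := pselect (exists x : 'cV[R]_b, norm2 x = 1).
exact: le_trans (norm2_ge0 _) (norm2_mulmx_le_specnorm A x1).
Qed.

Lemma norm2_mulmx_le a b (A : 'M[R]_(a, b)) (x : 'cV[R]_b) :
  norm2 (A *m x) <= specnorm A * norm2 x.
Proof.
have [/norm2_eq0 -> | x_neq0] := eqVneq (norm2 x) 0.
  by rewrite mulmx0 !norm2_0 mulr0.
have x_gt0 : 0 < norm2 x by rewrite lt0r x_neq0 norm2_ge0.
have y1 : norm2 ((norm2 x)^-1 *: x) = 1.
  by rewrite norm2Z ger0_norm ?invr_ge0 ?norm2_ge0 // mulVf.
have := norm2_mulmx_le_specnorm A y1.
by rewrite -scalemxAr norm2Z ger0_norm ?invr_ge0 ?norm2_ge0 // mulrC ler_pdivrMr.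
Qed.

Lemma norm2_trmx_mulmx_le a b (A : 'M[R]_(a, b)) (y : 'cV[R]_a) :
  norm2 y = 1 -> norm2 (A^T *m y) <= specnorm A.
Proof.
move=> y1; set z := A^T *m y.
have z2 : norm2 z ^+ 2 = inner y (A *m z).
  by rewrite norm2_sqr !inner_trmx_mulmx /z trmx_mul trmxK !mulmxA.
have := inner_le_norm2 y (A *m z); rewrite y1 mul1r -z2 => zzA.
have := norm2_mulmx_le A z; have := norm2_ge0 z; have := specnorm_ge0 A.
nra.
Qed.

Lemma specnorm_trmx_le a b (A : 'M[R]_(a, b)) : specnorm A^T <= specnorm A.
Proof.
have [[y y1] | /(specnorm_eq0_no_unit A^T) ->] :=
  pselect (exists y : 'cV[R]_a, norm2 y = 1); last exact: specnorm_ge0.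
apply: ge_sup; first by exists (norm2 (A^T *m y)), y.
by move=> _ [x x1 <-]; exact: norm2_trmx_mulmx_le.
Qed.

End SpectralNorm.

Section TopIndexSets.
Variables (R : realType) (n : nat).
Implicit Types (x y e r : 'cV[R]_n) (S T : {set 'I_n}).

Lemma subnorm2D x y S : subnorm2 (x + y) S <= subnorm2 x S + subnorm2 y S.
Proof.
rewrite /subnorm2 (eq_bigr (fun i => (x i 0 + y i 0) ^+ 2)); first exact: minkowski_sum.
by move=> i _; rewrite mxE.
Qed.

Lemma subnorm2Z (c : R) x S : subnorm2 (c *: x) S = `|c| * subnorm2 x S.
Proof. by rewrite /subnorm2 -(sqrt_sum_sqZ (mem S)); under eq_bigr do rewrite mxE. Qed.

Lemma subnorm2N x S : subnorm2 (- x) S = subnorm2 x S.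
Proof. by rewrite -scaleN1r subnorm2Z normrN1 mul1r. Qed.

Lemma subnorm2_mulmx_le_specnorm_submx (M : 'M[R]_n) y S T :
  norm2 y = 1 -> supported_on y T -> subnorm2 (M *m y) S <= specnorm (Defs.submx S T M).
Proof.
move=> y1 y_supp.
have sum_over_T (f : 'I_n -> R) : (forall k, k \notin T -> f k = 0) ->
    \sum_(j < #|T|) f (enum_val j) = \sum_k f k.
  move=> f0; rewrite -(big_enum_val f) /= big_mkcond.
  by apply: eq_bigr => k _; case: ifPn => // /f0.
set yT : 'cV[R]_#|T| := \col_j y (enum_val j) 0.
have yT1 : norm2 yT = 1.
  rewrite -y1 /norm2; congr Num.sqrt; under eq_bigr do rewrite mxE.
  by apply: sum_over_T => k /y_supp ->; rewrite expr0n.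
suff -> : subnorm2 (M *m y) S = norm2 (Defs.submx S T M *m yT).
  exact: norm2_mulmx_le_specnorm.
rewrite /subnorm2 /norm2 big_enum_val /=; congr Num.sqrt.
apply: eq_bigr => i _; rewrite !mxE; congr (_ ^+ 2).
under [RHS]eq_bigr do rewrite !mxE.
by symmetry; apply: sum_over_T => k /y_supp ->; rewrite mulr0.
Qed.

Lemma top_sq_sum_attained x p : (p <= n)%N ->
  exists2 T : {set 'I_n}, #|T| = p & \sum_(i in T) x i 0 ^+ 2 = top_sq_sum x p.
Proof.
move=> p_le_n; rewrite /top_sq_sum sort_map.
set s := sort _ (enum 'I_n).
have s_uniq : uniq (take p s) by rewrite take_uniq // sort_uniq enum_uniq.
exists [set i in take p s].
  by rewrite cardsE (card_uniqP s_uniq) size_takel // size_sort size_enum_ord.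
rewrite -map_take big_map (big_uniq _ s_uniq).
apply: eq_big => [i | i _]; first by rewrite inE.
by rewrite real_normK // num_real.
Qed.

Lemma top_index_set_sum_sq_max r p S T :
  top_index_set r p S -> #|T| = p ->
  \sum_(i in T) r i 0 ^+ 2 <= \sum_(i in S) r i 0 ^+ 2.
Proof.
move=> [cardS S_top] cardT.
rewrite [leLHS](big_setID S) [leRHS](big_setID T) /= finset.setIC lerD2l.
have cardD : #|T :\: S| = #|S :\: T| by rewrite !cardsD finset.setIC cardS cardT.
(* every entry of T outside S is dominated by every entry of S outside T *)
set c := \big[Order.max/0]_(j in T :\: S) r j 0 ^+ 2.
apply: (@le_trans _ _ (c *+ #|T :\: S|)).
  by rewrite -sumr_const; apply: ler_sum => j Tj; exact: le_bigmax_cond.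
rewrite cardD -sumr_const; apply: ler_sum => i; rewrite inE => /andP[iT iS].
apply: bigmax_le => [|j]; first exact: sqr_ge0.
rewrite inE => /andP[jS _].
rewrite -[leLHS]real_normK ?num_real // -[leRHS]real_normK ?num_real //.
by rewrite ler_sqr ?nnegrE // S_top.
Qed.

Lemma top_index_set_perturbation (a B : R) x e p S :
  a != 0 -> top_index_set (a *: x + e) p S ->
  (forall T, #|T| = p -> subnorm2 e T <= B) ->
  Num.sqrt (top_sq_sum x p) - 2 * B / `|a| <= subnorm2 x S.
Proof.
move=> a_neq0 top e_le.
have cardS : #|S| = p by case: top.
have p_le_n : (p <= n)%N by rewrite -cardS -[leqRHS](card_ord n) max_card.
have [T cardT <-] := top_sq_sum_attained x p_le_n.
set r := a *: x + e.
have rT_le_rS : subnorm2 r T <= subnorm2 r S.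
  rewrite /subnorm2 ler_sqrt; last exact: sum_sq_ge0.
  exact: top_index_set_sum_sq_max top cardT.
have xT_le : `|a| * subnorm2 x T <= subnorm2 r T + subnorm2 e T.
  by rewrite -subnorm2Z -(subnorm2N e) (_ : a *: x = r - e) ?subnorm2D // addrK.
have rS_le : subnorm2 r S <= `|a| * subnorm2 x S + subnorm2 e S.
  by rewrite -subnorm2Z subnorm2D.
have a_gt0 : 0 < `|a| by rewrite normr_gt0.
change (subnorm2 x T - 2 * B / `|a| <= subnorm2 x S).
rewrite lerBlDr -(ler_pM2l a_gt0) mulrDr [`|a| * (_ / _)]mulrC divfK ?gt_eqF //.
have := e_le S cardS; have := e_le T cardT; lra.
Qed.

End TopIndexSets.

Section SpikedModel.
Variable R : realType.

Lemma ln_natr_ge0 (n : nat) : 0 <= ln (n%:R : R).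
Proof. by case: n => [|n]; [rewrite ln0 | rewrite ln_ge0 // ler1n]. Qed.

Lemma sqrt_divD_le (k l c d : R) : 1 <= k -> 0 <= l -> 0 <= c -> 0 <= d ->
  Num.sqrt ((k * l + c * l) / d) <= (1 + c) * Num.sqrt (k * l / d).
Proof.
move=> k_ge1 l_ge0 c_ge0 d_ge0.
have c1_ge0 : 0 <= 1 + c by lra.
have kl_ge0 : 0 <= k * l by rewrite mulr_ge0 //; lra.
rewrite -(ger0_norm c1_ge0) -sqrtr_sqr -sqrtrM ?sqr_ge0 // ler_sqrt; last first.
  by rewrite mulr_ge0 ?sqr_ge0 ?divr_ge0.
rewrite mulrA ler_wpM2r ?invr_ge0 //.
have : 0 <= c * (k * l - l) by rewrite mulr_ge0 // subr_ge0; nra.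
have : 0 <= c ^+ 2 * (k * l) by rewrite mulr_ge0 ?sqr_ge0.
nra.
Qed.

Lemma supported_unit_card_gt0 n (x : 'cV[R]_n) (S : {set 'I_n}) :
  norm2 x = 1 -> supported_on x S -> (0 < #|S|)%N.
Proof.
move=> x1 x_supp; rewrite card_gt0; apply: contra_eqN x1 => /eqP S0.
suff -> : x = 0 by rewrite norm2_0 eq_sym oner_eq0.
by apply/matrixP => i j; rewrite (ord1 j) mxE x_supp // S0 inE.
Qed.

Lemma mulmx_outer n (x w y : 'cV[R]_n) : (x *m w^T) *m y = inner w y *: x.
Proof.
rewrite -mulmxA -mul_mx_scalar; congr (_ *m _).
by apply/matrixP => i j; rewrite (ord1 i) (ord1 j) inner_trmx_mulmx !mxE mulr1n.
Qed.

Lemma spiked_top_index_set_bound n (C' c' rho k l d : R) (x w y : 'cV[R]_n)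
    (M : 'M[R]_n) p (S : {set 'I_n}) :
  0 <= C' -> 0 <= c' -> 0 < rho -> 1 <= k -> 0 <= l -> 0 <= d ->
  inner w y != 0 -> top_index_set (M *m y) p S ->
  (forall T : {set 'I_n}, #|T| = p ->
     subnorm2 ((M - rho *: (x *m w^T)) *m y) T <= C' * Num.sqrt ((k * l + c' * l) / d)) ->
  Num.sqrt ((sfun x p)^-1)
    - 2 * (C' * (1 + c')) * (1 + rho) / (rho * `|inner w y|) * Num.sqrt (k * l / d)
  <= subnorm2 x S.
Proof.
move=> C'_ge0 c'_ge0 rho_gt0 k_ge1 l_ge0 d_ge0 wy_neq0 top noise_le.
set a := rho * inner w y; set t := Num.sqrt (k * l / d).
have Mx : M *m y = a *: x + (M - rho *: (x *m w^T)) *m y.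
  by rewrite mulmxBl -scalemxAl mulmx_outer scalerA addrC subrK.
have a_neq0 : a != 0 by rewrite mulf_neq0 // gt_eqF.
have noise_le' (T : {set 'I_n}) : #|T| = p -> subnorm2 ((M - rho *: (x *m w^T)) *m y) T <= C' * (1 + c') * t.
  move=> cardT; apply: le_trans (noise_le T cardT) _.
  by rewrite -mulrA ler_wpM2l // sqrt_divD_le.
rewrite Mx in top; have := top_index_set_perturbation a_neq0 top noise_le'.
rewrite /sfun invrK normrM (gtr0_norm rho_gt0); apply: le_trans.
apply: lerB (lexx _) _; rewrite [leRHS]mulrAC ler_wpM2r ?invr_ge0 ?mulr_ge0 ?(ltW rho_gt0) //.
have : 0 <= C' * (1 + c') * t by rewrite !mulr_ge0 ?sqrtr_ge0 //; lra.
nra.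
Qed.

Lemma event_E_subnorm2 n m ku kv (C' c' : R) (W : 'M[R]_n) (y : 'cV[R]_n)
    (S T : {set 'I_n}) :
  event_E m ku kv C' c' W -> (#|S| <= ku)%N -> (#|T| <= kv)%N ->
  norm2 y = 1 -> supported_on y T ->
  subnorm2 (W *m y) S <=
    C' * Num.sqrt (((#|S| + #|T|)%:R * ln n%:R + c' * ln n%:R) / m%:R).
Proof.
move=> E S_ku T_kv y1 y_supp.
exact: le_trans (subnorm2_mulmx_le_specnorm_submx W S y1 y_supp) (E _ _ S_ku T_kv).
Qed.

Lemma event_E_subnorm2_trmx n m ku kv (C' c' : R) (W : 'M[R]_n) (x : 'cV[R]_n)
    (S T : {set 'I_n}) :
  event_E m ku kv C' c' W -> (#|S| <= ku)%N -> (#|T| <= kv)%N ->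
  norm2 x = 1 -> supported_on x S ->
  subnorm2 (W^T *m x) T <=
    C' * Num.sqrt (((#|S| + #|T|)%:R * ln n%:R + c' * ln n%:R) / m%:R).
Proof.
move=> E S_ku T_kv x1 x_supp.
apply: le_trans (subnorm2_mulmx_le_specnorm_submx W^T T x1 x_supp) _.
have -> : Defs.submx T S W^T = (Defs.submx S T W)^T by apply/matrixP => i j; rewrite !mxE.
exact: le_trans (specnorm_trmx_le _) (E _ _ S_ku T_kv).
Qed.

End SpikedModel.

Theorem proposition4 (R : realType) (C' c' : R) (hC' : 0 < C') (hc' : 0 < c') :
  exists C : R, 0 < C /\
  forall (n m ku kv : nat) (rho : R) (u v : 'cV[R]_n)
         (X Y : 'I_m -> 'cV[R]_n),
    (0 < m)%N ->
    0 < rho -> rho < 1 ->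
    norm2 u = 1 -> norm2 v = 1 ->
    (l0 u <= ku)%N -> (l0 v <= kv)%N ->
    let Sig := sample_cross_cov X Y in
    event_E m ku kv C' c' (Sig - rho *: (u *m v^T)) ->
    (forall (Sv : {set 'I_n}) (vh : 'cV[R]_n) (p : nat) (Su' : {set 'I_n}),
       (#|Sv| <= kv)%N -> norm2 vh = 1 -> supported_on vh Sv ->
       inner v vh != 0 ->
       (p <= ku)%N -> top_index_set (Sig *m vh) p Su' ->
       subnorm2 u Su' >=
         Num.sqrt ((sfun u #|Su'|)^-1)
         - (2 * C * (1 + rho)) / (rho * `|inner v vh|)
           * Num.sqrt (((#|Su'| + #|Sv|)%:R * ln (n%:R)) / m%:R))
    /\
    (forall (Su : {set 'I_n}) (uh : 'cV[R]_n) (q : nat) (Sv' : {set 'I_n}),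
       (#|Su| <= ku)%N -> norm2 uh = 1 -> supported_on uh Su ->
       inner u uh != 0 ->
       (q <= kv)%N -> top_index_set (Sig^T *m uh) q Sv' ->
       subnorm2 v Sv' >=
         Num.sqrt ((sfun v #|Sv'|)^-1)
         - (2 * C * (1 + rho)) / (rho * `|inner u uh|)
           * Num.sqrt (((#|Su| + #|Sv'|)%:R * ln (n%:R)) / m%:R)).
Proof.
exists (C' * (1 + c')); split; first by rewrite mulr_gt0 // addr_gt0.
move=> n m ku kv rho u v X Y _ rho_gt0 _ _ _ _ _ Sig E; split.
- move=> Sv vh p Su' Sv_kv vh1 vh_supp vvh_neq0 p_ku top.
  have cardS : #|Su'| = p by case: top.
  rewrite cardS; apply: spiked_top_index_set_bound
    (ltW hC') (ltW hc') rho_gt0 _ (ln_natr_ge0 R n) (ler0n R m) vvh_neq0 top _.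
  + by rewrite ler1n addn_gt0 (supported_unit_card_gt0 vh1 vh_supp) orbT.
  + move=> T cardT; rewrite -cardT.
    by apply: (event_E_subnorm2 E) vh1 vh_supp => //; rewrite cardT.
- move=> Su uh q Sv' Su_ku uh1 uh_supp uuh_neq0 q_kv top.
  have cardS : #|Sv'| = q by case: top.
  have WT : (Sig - rho *: (u *m v^T))^T = Sig^T - rho *: (v *m u^T).
    by rewrite linearB /= [X in _ - X]linearZ /= trmx_mul trmxK.
  rewrite cardS; apply: spiked_top_index_set_bound
    (ltW hC') (ltW hc') rho_gt0 _ (ln_natr_ge0 R n) (ler0n R m) uuh_neq0 top _.
  + by rewrite ler1n addn_gt0 (supported_unit_card_gt0 uh1 uh_supp).
  + move=> T cardT; rewrite -WT -cardT.
    by apply: (event_E_subnorm2_trmx E) uh1 uh_supp => //; rewrite cardT.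
Qed.
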